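(* For every base $\mathscr{B}$, finite multisets of atoms $S,T$, and IMLL formulas $\varphi,\psi,\chi$: if $\Vdash^{S}_{\mathscr{B}}\varphi\otimes\psi$ and $\varphi,\psi\Vdash^{T}_{\mathscr{B}}\chi$, then $\Vdash^{S,T}_{\mathscr{B}}\chi$.
   Context: Fix a countably infinite set $\mathbb{A}$ of atoms. IMLL formulas: $\varphi::= p\in\mathbb{A}\mid\varphi\otimes\varphi\mid \mathrm{I}\mid\varphi\multimap\varphi$. Collections are finite multisets; ''$,$'' denotes multiset union. An atomic rule is $(P_1\triangleright p_1,\dots,P_n\triangleright p_n)\Rightarrow p$ ($n\ge0$, $P_i$ finite multisets of atoms); a base is a set of atomic rules. Derivability $\vdash_{\mathscr{B}}$ is the least relation with (Ref) $[p]\vdash_{\mathscr{B}}p$; (App) if $(P_1\triangleright p_1,\dots,P_n\triangleright p_n)\Rightarrow p\in\mathscr{B}$ and $S_i,P_i\vdash_{\mathscr{B}}p_i$ for all $i$, then $S_1,\dots,S_n\vdash_{\mathscr{B}}p$. Support: (At) $\Vdash^{P}_{\mathscr{B}}p$ iff $P\vdash_{\mathscr{B}}p$; ($\otimes$) $\Vdash^{P}_{\mathscr{B}}\varphi\otimes\psi$ iff for every $\mathscr{X}\supseteq\mathscr{B}$, multiset of atoms $U$, atom $p$, if $\varphi,\psi\Vdash^{U}_{\mathscr{X}}p$ then $\Vdash^{P,U}_{\mathscr{X}}p$; ($\mathrm{I}$) $\Vdash^{P}_{\mathscr{B}}\mathrm{I}$ iff for every $\mathscr{X}\supseteq\mathscr{B}$,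 $U$, $p$, if $\Vdash^{U}_{\mathscr{X}}p$ then $\Vdash^{P,U}_{\mathscr{X}}p$; ($\multimap$) $\Vdash^{P}_{\mathscr{B}}\varphi\multimap\psi$ iff $\varphi\Vdash^{P}_{\mathscr{B}}\psi$; (comma) for nonempty $\Gamma,\Delta$, $\Vdash^{P}_{\mathscr{B}}\Gamma,\Delta$ iff $P=U,V$ for some $U,V$ with $\Vdash^{U}_{\mathscr{B}}\Gamma$, $\Vdash^{V}_{\mathscr{B}}\Delta$ (singleton $[\varphi]$ supported iff $\varphi$ is); (Inf) for nonempty $\Gamma$, $\Gamma\Vdash^{P}_{\mathscr{B}}\varphi$ iff for every $\mathscr{X}\supseteq\mathscr{B}$ and $U$, if $\Vdash^{U}_{\mathscr{X}}\Gamma$ then $\Vdash^{P,U}_{\mathscr{X}}\varphi$. *)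

From HB Require Import structures.
From mathcomp Require Import all_boot.
From mathcomp Require Import finmap multiset.

Set Implicit Arguments.
Unset Strict Implicit.
Unset Printing Implicit Defensive.

Local Open Scope fset_scope.
Local Open Scope mset_scope.

Definition atom := nat.

Definition amset := {mset nat}.

Inductive formula : Type :=
| Atom  : atom -> formula
| Tens  : formula -> formula -> formula
| One   : formula
| Lolli : formula -> formula -> formula.

(* Atomic rule (P_1 |> p_1, ..., P_n |> p_n) => p *)
Definition rule := (seq (amset * atom) * atom)%type.

Definition base := rule -> Prop.

Definition ext (B X : base) : Prop := forall r, B r -> X r.

Inductive deriv (B : base) : amset -> atom -> Prop :=
| DRef p : deriv B [mset p] p
| DApp prems p S : B (prems, p) -> derivs B prems S -> deriv B S p
(* derivs B [(P_1,p_1);...;(P_n,p_n)] S  iff  S = S_1,...,S_n with S_i,P_i |-_B p_i *)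
with derivs (B : base) : seq (amset * atom) -> amset -> Prop :=
| DSnil : derivs B [::] mset0
| DScons P q prems S1 S :
    deriv B (S1 `+` P) q -> derivs B prems S -> derivs B ((P, q) :: prems) (S1 `+` S).

Fixpoint supp (B : base) (P : amset) (phi : formula) {struct phi} : Prop :=
  match phi with
  | Atom p => deriv B P p
  | Tens f g =>
      (* for all X >= B, U, p: if f,g ||-^U_X p then ||-^{P,U}_X p *)
      forall (X : base) (U : amset) (p : atom), ext B X ->
        (forall (Y : base) (W : amset), ext X Y ->
           (exists U1 U2, W = U1 `+` U2 /\ supp Y U1 f /\ supp Y U2 g) ->
           deriv Y (U `+` W) p) ->
        deriv X (P `+` U) p
  | One =>
      forall (X : base) (U : amset) (p : atom), ext B X ->
        deriv X U p -> deriv X (P `+` U) p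
  | Lolli f g =>
      (* f ||-^P_B g, by (Inf) with the singleton context [f] *)
      forall (X : base) (U : amset), ext B X ->
        supp X U f -> supp X (P `+` U) g
  end.

Fixpoint suppC (B : base) (P : amset) (phi : formula) (Gamma : seq formula)
  {struct Gamma} : Prop :=
  match Gamma with
  | [::] => supp B P phi
  | psi :: Gamma' =>
      exists U V, P = U `+` V /\ supp B U phi /\ suppC B V psi Gamma'
  end.

Definition infer (B : base) (P : amset) (phi : formula) (Gamma : seq formula)
  (chi : formula) : Prop :=
  forall (X : base) (U : amset), ext B X ->
    suppC X U phi Gamma -> supp X (P `+` U) chi.

From HB Require Import structures.
From mathcomp Require Import all_boot.
From mathcomp Require Import finmap multiset.

Local Open Scope mset_scope.

(* The proof is by induction on chi.
   - Support is monotone along base extensions (deriv_mono, supp_mono).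
   - The clause for phi * psi says exactly that S may replace the pair
     phi, psi in front of any atomic conclusion in any extension
     (tens_elim_deriv); this settles the atomic case directly, and also the
     cases chi = f * g and chi = I, whose support is itself defined through
     atomic conclusions in extensions.
   - For chi = f -o g, an extra resource U supporting f is moved into the
     inference context (infer_lolli) and the induction hypothesis for g is
     applied with context T,U. *)

Scheme deriv_mut := Induction for deriv Sort Prop
  with derivs_mut := Induction for derivs Sort Prop.

Lemma ext_refl (A : base) : ext A A.
Proof. by []. Qed.

Lemma ext_trans {A B C : base} : ext A B -> ext B C -> ext A C.
Proof. by move=> AB BC r /AB /BC. Qed.

Lemma deriv_mono {B X : base} {P : amset} {p : atom} :
  ext B X -> deriv B P p -> deriv X P p.
Proof.
move=> BX; apply: (deriv_mut B (fun P p _ => deriv X P p)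
                                (fun prems S _ => derivs X prems S)).
- exact: DRef.
- by move=> prems q S /BX rule _; apply: DApp rule.
- exact: DSnil.
- by move=> P0 q prems S1 S _ d _ ds; apply: DScons.
Qed.

(* Support is preserved along base extensions: every clause quantifies over
   all extensions, except the atomic one, which is deriv_mono. *)
Lemma supp_mono {B X : base} {P : amset} {phi : formula} :
  ext B X -> supp B P phi -> supp X P phi.
Proof.
case: phi => [p|f g||f g] BX /=; first exact: deriv_mono.
all: by move=> h Y *; apply: h => //; apply: ext_trans BX _.
Qed.

Lemma infer_pair {B Y : base} {T U1 U2 : amset} {phi psi chi : formula} :
  infer B T phi [:: psi] chi -> ext B Y ->
  supp Y U1 phi -> supp Y U2 psi -> supp Y (T `+` (U1 `+` U2)) chi.
Proof. by move=> inf BY h1 h2; apply: inf => //; exists U1, U2. Qed.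

Lemma infer_lolli {B X : base} {T U : amset} {phi psi f g : formula} :
  infer B T phi [:: psi] (Lolli f g) -> ext B X -> supp X U f ->
  infer X (T `+` U) phi [:: psi] g.
Proof.
move=> inf BX hf Y W XY hW.
have hWU := inf Y W (ext_trans BX XY) hW Y U (ext_refl Y) (supp_mono XY hf).
by rewrite msetDAC.
Qed.

Lemma tens_elim_deriv {B X : base} {S R : amset} {phi psi : formula} {p : atom} :
  supp B S (Tens phi psi) -> ext B X ->
  (forall Y U1 U2, ext X Y -> supp Y U1 phi -> supp Y U2 psi ->
     deriv Y (R `+` (U1 `+` U2)) p) ->
  deriv X (S `+` R) p.
Proof.
move=> hS BX k; apply: hS BX _ => Y W XY [U1 [U2 [-> [h1 h2]]]].
exact: k.
Qed.

Theorem lemma2 (B : base) (S T : amset) (phi psi chi : formula) :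
  supp B S (Tens phi psi) ->
  infer B T phi [:: psi] chi ->
  supp B (S `+` T) chi.
Proof.
elim: chi B T => [p|f _ g _||f _ g IHg] B T hS inf /=.
- apply: (tens_elim_deriv hS (ext_refl B)) => Y U1 U2 BY h1 h2.
  exact: (infer_pair inf BY h1 h2).
- move=> X U p BX k; rewrite -msetDA.
  apply: (tens_elim_deriv hS BX) => Y U1 U2 XY h1 h2.
  rewrite msetDAC.
  apply: (infer_pair inf (ext_trans BX XY) h1 h2 Y U p (ext_refl Y)).
  by move=> Z W YZ; apply: k (ext_trans XY YZ).
- move=> X U p BX d; rewrite -msetDA.
  apply: (tens_elim_deriv hS BX) => Y U1 U2 XY h1 h2.
  rewrite msetDAC.
  exact: (infer_pair inf (ext_trans BX XY) h1 h2 Y U p (ext_refl Y)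
            (deriv_mono XY d)).
- move=> X U BX hf; rewrite -msetDA.
  exact: IHg (supp_mono BX hS) (infer_lolli inf BX hf).
Qed.
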